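(* Let $G$ be an $(N,k)$ Adinkra with associated code $C$, with the matrices $\gamma_1,\dots,\gamma_N$ defined as in the context, and let $M=\gamma_{i_1}\gamma_{i_2}\cdots\gamma_{i_t}$ for some $i_1,\dots,i_t\in\{1,\dots,N\}$. Then, for a vertex $x$, the diagonal entry $M_{x,x}$ is non-zero if and only if the walk starting at $x$ and successively following edges of colors $i_1,i_2,\dots,i_t$ is closed (returns to $x$). This happens in one of two ways: (i) trivially, when each edge color occurs an even number of times in $(i_1,\dots,i_t)$, or (ii) when the vector $w\in\mathbb{Z}_2^N$ with $w_i=1$ exactly for the colors occurring an odd number of times in $(i_1,\dots,i_t)$ is a (nonzero) codeword of $C$.
   Context: An Adinkra of dimension $N$ is a finite connected simple graph $G=(V,E)$ with: a bipartition of $V$ into bosons and fermions (every edge joins a boson and a fermion); a height function (irrelevant here); a coloring of $E$ by colors $\{1,\dots,N\}$ such that each vertex is incident to exactly one edge of each color; an edge parity $\pi:E\to\mathbb{Z}_2$ (parity $1$ = dashed); such that every path with edge colors $(i,j)$, $i\ne j$, lies in a unique 4-cycle with colors $(i,j,i,j)$, each having an odd number of dashed edges. If $|V|=2^{N-k}$, $G$ is an $(N,k)$ Adinkra; it has $n=2^{N-k-1}$ bosons $b_1,\dots,b_n$ and $n$ fermions $f_1,\dots,f_n$. A doubly even $(N,k)$ code is a $k$-dimensional subspace of $\mathbb{Z}_2^N$ all of whose elements have weight $\equiv0\pmod4$; $G$ is obtained (up to switching and relabeling) from an $N$-cube Adinkra with vertex labels $\mathbb{Z}_2^N$ (color-$i$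 edges joining $v,v+e_i$) by identifying vertices whose labels differ by elements of a doubly even $(N,k)$ code $C$, its associated code. For each color $i$, $L_i$ is the $n\times n$ matrix with $(L_i)_{r,s}=+1$ if $b_r,f_s$ are joined by a solid edge of color $i$, $-1$ if joined by a dashed edge of color $i$, and $0$ otherwise. $\gamma_i$ is the $2n\times 2n$ real symmetric matrix $\begin{pmatrix}0&L_i\\ L_i^{T}&0\end{pmatrix}$, with rows and columns indexed by $V$ (bosons first, then fermions). *)

From HB Require Import structures.
From mathcomp Require Import all_boot all_order all_algebra.
Set Implicit Arguments. Unset Strict Implicit. Unset Printing Implicit Defensive.
Import Order.TTheory GRing.Theory Num.Theory.
Local Open Scope ring_scope.

(* Vertices of an Adinkra with n bosons and n fermions are 'I_(n + n):
   boson b_r is [lshift n r], fermion f_s is [rshift n s] (bosons first).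
   Colours {1..N} are represented by 'I_N.
   adj    : the (simple) edge relation
   col    : colour of the edge {x,y} (meaningful only when adj x y)
   dashed : parity of the edge {x,y} (true = dashed = parity 1)        *)

Section Adinkra.
Variables (N n : nat).
Local Notation V := 'I_(n + n).
Variables (adj : rel V) (col : V -> V -> 'I_N) (dashed : V -> V -> bool).

Definition is_boson (x : V) : bool := (x < n)%N.

Definition cycle4 (i j : 'I_N) (x y z w : V) : Prop :=
  [/\ adj x y /\ col x y = i, adj y z /\ col y z = j,
      adj z w /\ col z w = i & adj w x /\ col w x = j].

Definition is_adinkra : Prop :=
  (forall x y, adj x y = adj y x) /\
  (forall x, ~~ adj x x) /\
  (forall x y, connect adj x y) /\
  (forall x y, adj x y -> is_boson x != is_boson y) /\
  (forall x y, adj x y -> col x y = col y x /\ dashed x y = dashed y x) /\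
  (forall (x : V) (i : 'I_N), #|[set y | adj x y & col x y == i]| = 1%N) /\
  (forall (i j : 'I_N) (x y z : V), i != j ->
     adj x y -> col x y = i -> adj y z -> col y z = j ->
     exists w, [/\ cycle4 i j x y z w,
                  odd (dashed x y + dashed y z + dashed z w + dashed w x) &
                  forall w', cycle4 i j x y z w' -> w' = w]).

Definition step (x : V) (i : 'I_N) : V :=
  odflt x [pick y | adj x y & col x y == i].

Definition walk_end (x : V) (s : seq 'I_N) : V := foldl step x s.

Definition Lmat (i : 'I_N) : 'M[int]_n :=
  \matrix_(r < n, s < n)
    (if adj (lshift n r) (rshift n s) && (col (lshift n r) (rshift n s) == i)
     then (if dashed (lshift n r) (rshift n s) then -1 else 1)
     else 0).

Definition gamma (i : 'I_N) : 'M[int]_(n + n) :=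
  block_mx 0 (Lmat i) (Lmat i)^T 0.

Definition gamma_prod (s : seq 'I_N) : 'M[int]_(n + n) :=
  foldr (fun i A => gamma i *m A) 1%:M s.

End Adinkra.

Definition weight (N : nat) (w : 'rV['F_2]_N) : nat := #|[set i | w 0 i != 0]|.

Definition doubly_even_code (N k : nat) (C : {vspace 'rV['F_2]_N}) : Prop :=
  \dim C = k /\ forall w, w \in C -> (4 %| weight w)%N.

Definition unit_vec (N : nat) (i : 'I_N) : 'rV['F_2]_N := \row_j (j == i)%:R.

(* C is the associated code of the Adinkra: up to relabeling (and switching,
   which only affects parities) the coloured graph is the quotient of the
   N-cube (labels Z_2^N, colour-i edges v -- v + e_i) by C. *)
Definition associated_code (N n : nat) (adj : rel 'I_(n + n))
    (col : 'I_(n + n) -> 'I_(n + n) -> 'I_N) (C : {vspace 'rV['F_2]_N}) : Prop :=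
  exists lab : 'rV['F_2]_N -> 'I_(n + n),
    [/\ (forall x, exists v, lab v = x),
        (forall u v, lab u = lab v <-> u - v \in C) &
        (forall v (i : 'I_N), adj (lab v) (lab (v + unit_vec i)) /\
                              col (lab v) (lab (v + unit_vec i)) = i)].

Definition odd_colours (N : nat) (s : seq 'I_N) : 'rV['F_2]_N :=
  \row_i (odd (count_mem i s))%:R.

From HB Require Import structures.
From mathcomp Require Import all_boot all_order all_algebra.
Set Implicit Arguments. Unset Strict Implicit. Unset Printing Implicit Defensive.
Import Order.TTheory GRing.Theory Num.Theory.
Local Open Scope ring_scope.

(* Each gamma_i is a signed permutation matrix: its row x has a single entry
   +-1, in the column of the colour-i neighbour of x.  Hence a product of
   gammas is a signed permutation matrix following the coloured walk, and its
   diagonal entry at x is nonzero exactly when the walk is closed.  On the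
   cube labels the colour-i edge adds the unit vector e_i, so the walk from
   the vertex labelled v ends at the vertex labelled v + w, where w records
   the colours used an odd number of times; this is the starting vertex iff
   w lies in the code. *)

Section AdinkraWalks.
Variables (N n : nat) (adj : rel 'I_(n + n)).
Variables (col : 'I_(n + n) -> 'I_(n + n) -> 'I_N).
Variables (dashed : 'I_(n + n) -> 'I_(n + n) -> bool).
Hypothesis adinkraG : is_adinkra adj col dashed.

Local Notation step := (step adj col).
Local Notation walk_end := (walk_end adj col).
Local Notation gamma := (gamma adj col dashed).
Local Notation gamma_prod := (gamma_prod adj col dashed).

Lemma stepP x i y : (adj x y && (col x y == i)) = (y == step x i).
Proof.
case: adinkraG => _ [_ [_ [_ [_ [one_edge _]]]]].
have /cards1P [z edge_z] : #|[set y | adj x y & col x y == i]| == 1%N.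
  by rewrite one_edge.
have edgeE t : (adj x t && (col x t == i)) = (t == z).
  by move/setP: edge_z => /(_ t); rewrite !inE.
rewrite edgeE /step; case: pickP => [t|no_edge]; last first.
  by move: (no_edge z); rewrite /= edgeE eqxx.
by rewrite /= edgeE => /eqP ->.
Qed.

Lemma step_edge x i : adj x (step x i) && (col x (step x i) == i).
Proof. by rewrite stepP. Qed.

Lemma gammaE i x y :
  gamma i x y = if adj x y && (col x y == i) then (-1) ^+ dashed x y else 0.
Proof.
case: adinkraG => adjC [_ [_ [bipartite [edge_sym _]]]].
have no_bb r r' : adj (lshift n r) (lshift n r') = false.
  by apply/negP => /bipartite; rewrite /is_boson /= !ltn_ord.
have no_ff r r' : adj (rshift n r) (rshift n r') = false.
  by apply/negP => /bipartite; rewrite /is_boson /= -!ltn_subRL !subnn.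
rewrite /gamma -[x]splitK -[y]splitK.
case: (split x) => r; case: (split y) => r' /=.
- by rewrite block_mxEul mxE no_bb.
- by rewrite block_mxEur mxE; case: ifP => //; case: dashed.
- rewrite block_mxEdl !mxE adjC; case: (boolP (adj _ _)) => //= adj_yx.
  by case: (edge_sym _ _ adj_yx) => -> ->; case: ifP => //; case: dashed.
- by rewrite block_mxEdr mxE no_ff.
Qed.

Lemma gamma_mulmxE i (A : 'M[int]_(n + n)) x y :
  (gamma i *m A) x y = (-1) ^+ dashed x (step x i) * A (step x i) y.
Proof.
rewrite mxE (bigD1 (step x i)) //= big1 ?addr0 => [|z z_neq].
  by rewrite gammaE step_edge.
by rewrite gammaE stepP (negPf z_neq) mul0r.
Qed.

Lemma gamma_prodE s x : exists b : bool, forall y,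
  gamma_prod s x y = if y == walk_end x s then (-1) ^+ b else 0.
Proof.
elim: s x => [|i s IHs] x.
  by exists false; move=> y; rewrite /gamma_prod /= mxE eq_sym; case: eqP.
have [b gamma_sE] := IHs (step x i).
exists (dashed x (step x i) (+) b); move=> y.
rewrite [gamma_prod _]/= gamma_mulmxE gamma_sE signr_addb.
by case: ifP; rewrite ?mulr0.
Qed.

Lemma gamma_prod_diag_neq0 s x :
  gamma_prod s x x != 0 <-> walk_end x s = x.
Proof.
have [b ->] := gamma_prodE s x.
rewrite (eq_sym x); have [-> | walk_open] := eqVneq (walk_end x s) x.
  by rewrite signr_eq0.
by rewrite eqxx; split=> // /eqP; rewrite (negPf walk_open).
Qed.

End AdinkraWalks.

Lemma odd_colours_nil N : odd_colours ([::] : seq 'I_N) = 0.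
Proof. by apply/matrixP => a j; rewrite !mxE. Qed.

Lemma odd_colours_cons N (i : 'I_N) s :
  odd_colours (i :: s) = unit_vec i + odd_colours s.
Proof.
apply/matrixP => a j; rewrite !mxE /= oddD eq_sym.
by case: (j == i); case: (odd (count_mem j s)); apply/val_inj.
Qed.

Section CubeQuotient.
Variables (N n : nat) (adj : rel 'I_(n + n)).
Variables (col : 'I_(n + n) -> 'I_(n + n) -> 'I_N).
Variables (dashed : 'I_(n + n) -> 'I_(n + n) -> bool).
Hypothesis adinkraG : is_adinkra adj col dashed.
Variable lab : 'rV['F_2]_N -> 'I_(n + n).
Hypothesis lab_edge : forall v (i : 'I_N),
  adj (lab v) (lab (v + unit_vec i)) /\ col (lab v) (lab (v + unit_vec i)) = i.

Lemma step_lab v i : step adj col (lab v) i = lab (v + unit_vec i).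
Proof.
apply/esym/eqP; rewrite -(stepP adinkraG).
by case: (lab_edge v i) => -> ->; rewrite eqxx.
Qed.

Lemma walk_end_lab s v : walk_end adj col (lab v) s = lab (v + odd_colours s).
Proof.
elim: s v => [|i s IHs] v; first by rewrite odd_colours_nil addr0.
by rewrite /walk_end /= step_lab -/(walk_end _ _ _ _) IHs odd_colours_cons addrA.
Qed.

End CubeQuotient.

Theorem mainTheorem11 (N k n : nat) (adj : rel 'I_(n + n))
    (col : 'I_(n + n) -> 'I_(n + n) -> 'I_N)
    (dashed : 'I_(n + n) -> 'I_(n + n) -> bool)
    (C : {vspace 'rV['F_2]_N}) :
  is_adinkra adj col dashed ->
  (n + n = 2 ^ (N - k))%N ->
  doubly_even_code k C ->
  associated_code adj col C ->
  forall (s : seq 'I_N) (x : 'I_(n + n)),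
    (gamma_prod adj col dashed s x x != 0 <-> walk_end adj col x s = x) /\
    (walk_end adj col x s = x <->
       (odd_colours s = 0 \/ (odd_colours s != 0 /\ odd_colours s \in C))).
Proof.
move=> adinkraG _ _ [lab [lab_onto lab_eq lab_edge]] s x.
split; first exact: gamma_prod_diag_neq0.
have [v <-] := lab_onto x.
rewrite (walk_end_lab adinkraG lab_edge); apply: iff_trans (lab_eq _ _) _.
rewrite addrC addKr.
have [-> | w_neq0] := eqVneq (odd_colours s) 0.
  by rewrite mem0v; split; auto.
split=> [w_in | [w_eq0 | [_ w_in] //]]; first by right.
by rewrite w_eq0 eqxx in w_neq0.
Qed.
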